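(* Let $\nu_0=\mathcal N(0,\tau_0^{-2})$ and $\nu_1=\mathcal N(0,\tau_1^{-2})$ (identified with their densities on $\mathbb{R}$) with $0<\tau_1^2<\tau_0^2$, let $\eta\in[0,1)$, and define $\xi(x)=-\log\big(\eta\,\nu_0(x)+(1-\eta)\,\nu_1(x)\big)$. Then for all $x\in\mathbb{R}$, $$\xi''(x)\ge\tau_1^2-2(\tau_0^2-\tau_1^2)\log\Big(1+\frac{\eta\tau_0}{(1-\eta)e\tau_1}\Big).$$ *)

From Stdlib Require Import Reals.
From Coquelicot Require Import Coquelicot.
Open Scope R_scope.

Definition normal_density (tau x : R) : R :=
  tau / sqrt (2 * PI) * exp (- (tau ^ 2 * x ^ 2) / 2).

Definition xi (eta tau0 tau1 : R) (x : R) : R :=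
  - ln (eta * normal_density tau0 x + (1 - eta) * normal_density tau1 x).

From Stdlib Require Import Reals Lra.
From Coquelicot Require Import Coquelicot.
Open Scope R_scope.

(* Writing D = tau0^2 - tau1^2 and w for the posterior weight of the first
   component, xi'' = tau1^2 + D w - x^2 D^2 w (1 - w): the precision of the
   second component plus the posterior mean of the extra precision minus its
   posterior variance.  With t = D x^2 / 2 and odds s = w / (1 - w), it remains
   to bound t w by ln (1 + s e^(t-1)); convexity of exp gives
   1 + s e^(t-1) >= (1 + s) e^(w (t-1)) >= e^(w t), and s e^(t-1) does not
   depend on x because the odds decay exactly like e^(-t). *)

Lemma exp_tangent_le a b : exp a * (1 + (b - a)) <= exp b.
Proof.
  replace (exp b) with (exp a * exp (b - a)) by (rewrite <- exp_plus; f_equal; ring).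
  apply Rmult_le_compat_l; [left; apply exp_pos | apply exp_ineq1_le].
Qed.

Lemma exp_convex l u : 0 <= l <= 1 -> exp (l * u) <= 1 - l + l * exp u.
Proof.
  intros hl.
  pose proof (exp_tangent_le (l * u) u) as hu.
  pose proof (exp_tangent_le (l * u) 0) as h0; rewrite exp_0 in h0.
  nra.
Qed.

Lemma exp_div_1plus_le s : 0 <= s -> exp (s / (1 + s)) <= 1 + s.
Proof.
  intros hs.
  pose proof (exp_tangent_le (s / (1 + s)) 0) as h; rewrite exp_0 in h.
  replace (1 + (0 - s / (1 + s))) with (/ (1 + s)) in h by (field; lra).
  apply Rmult_le_compat_r with (r := 1 + s) in h; [|lra].
  replace (exp (s / (1 + s)) * / (1 + s) * (1 + s)) with (exp (s / (1 + s))) in h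
    by (field; lra).
  lra.
Qed.

Lemma div_1plus_bounds s : 0 <= s -> 0 <= s / (1 + s) <= 1.
Proof.
  intros hs; split; [apply Rdiv_le_0_compat; lra|].
  apply Rmult_le_reg_r with (1 + s); [lra|].
  unfold Rdiv; rewrite Rmult_assoc, Rinv_l; lra.
Qed.

Lemma mul_div_1plus_le_ln s t :
  0 <= s -> t * (s / (1 + s)) <= ln (1 + s * exp (t - 1)).
Proof.
  intros hs.
  set (w := s / (1 + s)).
  assert (hw : 0 <= w <= 1) by (apply div_1plus_bounds, hs).
  assert (hexp : exp (t * w) <= 1 + s * exp (t - 1)).
  { replace (t * w) with (w + w * (t - 1)) by ring.
    rewrite exp_plus.
    apply Rle_trans with ((1 + s) * (1 - w + w * exp (t - 1))).
    - apply Rmult_le_compat; try (left; apply exp_pos).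
      + apply exp_div_1plus_le; lra.
      + apply exp_convex; lra.
    - right; unfold w; field; lra. }
  rewrite <- (ln_exp (t * w)).
  apply ln_le; [apply exp_pos | exact hexp].
Qed.

Lemma precision_variance_bound D s x : 0 <= D -> 0 <= s ->
  let w := s / (1 + s) in
  D * w - x ^ 2 * D ^ 2 * w * (1 - w) >= - 2 * D * ln (1 + s * exp (D * x ^ 2 / 2 - 1)).
Proof.
  intros hD hs w.
  set (t := D * x ^ 2 / 2).
  assert (ht : 0 <= t) by (unfold t; nra).
  assert (hw : 0 <= w <= 1) by (apply div_1plus_bounds, hs).
  pose proof (mul_div_1plus_le_ln s t hs) as hln; fold w t in hln.
  replace (x ^ 2 * D ^ 2 * w * (1 - w)) with (2 * D * (t * w) * (1 - w)) by (unfold t; field).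
  assert (2 * D * (t * w) * (1 - w) <= 2 * D * ln (1 + s * exp (t - 1))).
  { apply Rle_trans with (2 * D * (t * w)).
    - assert (0 <= 2 * D * (t * w)) by (apply Rmult_le_pos; nra). nra.
    - apply Rmult_le_compat_l; lra. }
  nra.
Qed.

Lemma normal_density_pos tau x : 0 < tau -> 0 < normal_density tau x.
Proof.
  intros htau; unfold normal_density.
  apply Rmult_lt_0_compat; [|apply exp_pos].
  apply Rdiv_lt_0_compat; [exact htau|].
  apply sqrt_lt_R0; pose proof PI_RGT_0; lra.
Qed.

Lemma normal_density_ratio tau0 tau1 x : 0 < tau1 ->
  normal_density tau0 x / normal_density tau1 x
  = tau0 / tau1 * exp (- ((tau0 ^ 2 - tau1 ^ 2) * x ^ 2 / 2)).
Proof.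
  intros htau1; unfold normal_density.
  assert (0 < sqrt (2 * PI)) by (apply sqrt_lt_R0; pose proof PI_RGT_0; lra).
  replace (exp (- (tau0 ^ 2 * x ^ 2) / 2))
    with (exp (- ((tau0 ^ 2 - tau1 ^ 2) * x ^ 2 / 2)) * exp (- (tau1 ^ 2 * x ^ 2) / 2))
    by (rewrite <- exp_plus; f_equal; field).
  pose proof (exp_pos (- (tau1 ^ 2 * x ^ 2) / 2)).
  field; lra.
Qed.

Lemma is_derive_normal_density tau x :
  is_derive (normal_density tau) x (- (tau ^ 2 * x) * normal_density tau x).
Proof.
  unfold normal_density; auto_derive; [exact I|].
  replace (- (tau ^ 2 * x ^ 2) / 2) with (- (tau * (tau * 1) * (x * (x * 1))) * / 2)
    by (unfold Rdiv; ring).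
  field; apply Rgt_not_eq, sqrt_lt_R0; pose proof PI_RGT_0; lra.
Qed.

Lemma is_derive_eq (f : R -> R) x l l' : is_derive f x l -> l = l' -> is_derive f x l'.
Proof. now intros h <-. Qed.

Section GaussianMixture.

Variables tau0 tau1 : R.

Definition gauss_mix (c0 c1 y : R) : R :=
  c0 * normal_density tau0 y + c1 * normal_density tau1 y.

Lemma is_derive_gauss_mix c0 c1 y :
  is_derive (gauss_mix c0 c1) y (- (y * gauss_mix (c0 * tau0 ^ 2) (c1 * tau1 ^ 2) y)).
Proof.
  eapply is_derive_eq.
  - apply (is_derive_plus (fun y => c0 * normal_density tau0 y)
                          (fun y => c1 * normal_density tau1 y));
      apply is_derive_scal; apply is_derive_normal_density.
  - cbn; unfold gauss_mix; ring.
Qed.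

Hypotheses (htau0 : 0 < tau0) (htau1 : 0 < tau1).
Variables c0 c1 : R.
Hypotheses (hc0 : 0 <= c0) (hc1 : 0 < c1).

Lemma gauss_mix_pos y : 0 < gauss_mix c0 c1 y.
Proof.
  unfold gauss_mix.
  pose proof (normal_density_pos tau0 y htau0).
  pose proof (normal_density_pos tau1 y htau1).
  assert (0 <= c0 * normal_density tau0 y) by (apply Rmult_le_pos; lra).
  assert (0 < c1 * normal_density tau1 y) by (apply Rmult_lt_0_compat; lra).
  lra.
Qed.

Lemma Derive_neg_ln_gauss_mix y :
  Derive (fun y => - ln (gauss_mix c0 c1 y)) y
  = y * gauss_mix (c0 * tau0 ^ 2) (c1 * tau1 ^ 2) y / gauss_mix c0 c1 y.
Proof.
  apply is_derive_unique.
  pose proof (gauss_mix_pos y).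
  eapply is_derive_eq.
  - apply (is_derive_opp (fun y => ln (gauss_mix c0 c1 y))).
    apply (is_derive_comp ln (gauss_mix c0 c1)).
    + apply is_derive_ln; assumption.
    + apply is_derive_gauss_mix.
  - cbn; field; lra.
Qed.

Definition gauss_mix_odds x : R :=
  c0 * normal_density tau0 x / (c1 * normal_density tau1 x).

Lemma Derive2_neg_ln_gauss_mix x :
  let w := gauss_mix_odds x / (1 + gauss_mix_odds x) in
  let D := tau0 ^ 2 - tau1 ^ 2 in
  Derive_n (fun y => - ln (gauss_mix c0 c1 y)) 2 x
  = tau1 ^ 2 + (D * w - x ^ 2 * D ^ 2 * w * (1 - w)).
Proof.
  intros w D.
  change (Derive_n ?f 2 x) with (Derive (Derive f) x).
  rewrite (Derive_ext _ _ x Derive_neg_ln_gauss_mix).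
  apply is_derive_unique.
  pose proof (gauss_mix_pos x).
  assert (hnum : is_derive (fun y => y * gauss_mix (c0 * tau0 ^ 2) (c1 * tau1 ^ 2) y) x
    (gauss_mix (c0 * tau0 ^ 2) (c1 * tau1 ^ 2) x
     - x ^ 2 * gauss_mix (c0 * tau0 ^ 2 * tau0 ^ 2) (c1 * tau1 ^ 2 * tau1 ^ 2) x)).
  { eapply is_derive_eq.
    - apply (is_derive_mult (fun y => y) (gauss_mix (c0 * tau0 ^ 2) (c1 * tau1 ^ 2)));
        [apply is_derive_id | apply is_derive_gauss_mix | intros; apply Rmult_comm].
    - cbn; ring. }
  eapply is_derive_eq.
  - apply (is_derive_div _ _ _ _ _ hnum (is_derive_gauss_mix c0 c1 x)); lra.
  - pose proof (normal_density_pos tau0 x htau0).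
    pose proof (normal_density_pos tau1 x htau1).
    cbn; unfold w, D, gauss_mix_odds; unfold gauss_mix in *.
    set (n0 := normal_density tau0 x) in *.
    set (n1 := normal_density tau1 x) in *.
    assert (0 <= c0 * n0) by (apply Rmult_le_pos; lra).
    assert (0 < c1 * n1) by (apply Rmult_lt_0_compat; lra).
    field; repeat split; lra.
Qed.

End GaussianMixture.

Theorem mainTheorem11 (tau0 tau1 eta : R)
  (htau1 : 0 < tau1) (htau : tau1 < tau0)
  (heta0 : 0 <= eta) (heta1 : eta < 1) :
  forall x : R,
    Derive_n (xi eta tau0 tau1) 2 x >=
      tau1 ^ 2 - 2 * (tau0 ^ 2 - tau1 ^ 2)
        * ln (1 + eta * tau0 / ((1 - eta) * exp 1 * tau1)).
Proof.
  intros x.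
  assert (htau0 : 0 < tau0) by lra.
  assert (hD : 0 <= tau0 ^ 2 - tau1 ^ 2) by nra.
  set (s := gauss_mix_odds tau0 tau1 eta (1 - eta) x).
  assert (hs : 0 <= s).
  { unfold s, gauss_mix_odds.
    pose proof (normal_density_pos tau0 x htau0).
    pose proof (normal_density_pos tau1 x htau1).
    apply Rdiv_le_0_compat; nra. }
  assert (hodds : s * exp ((tau0 ^ 2 - tau1 ^ 2) * x ^ 2 / 2 - 1)
                  = eta * tau0 / ((1 - eta) * exp 1 * tau1)).
  { pose proof (normal_density_pos tau1 x htau1).
    replace s with (eta / (1 - eta) * (normal_density tau0 x / normal_density tau1 x))
      by (unfold s, gauss_mix_odds; field; lra).
    rewrite normal_density_ratio, Rmult_assoc, Rmult_assoc, <- exp_plus by lra.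
    replace (- ((tau0 ^ 2 - tau1 ^ 2) * x ^ 2 / 2) + ((tau0 ^ 2 - tau1 ^ 2) * x ^ 2 / 2 - 1))
      with (Ropp 1) by ring.
    rewrite exp_Ropp; pose proof (exp_pos 1).
    field; lra. }
  change (xi eta tau0 tau1) with (fun y => - ln (gauss_mix tau0 tau1 eta (1 - eta) y)).
  rewrite Derive2_neg_ln_gauss_mix by lra.
  fold s; rewrite <- hodds.
  pose proof (precision_variance_bound _ _ x hD hs); lra.
Qed.
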